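(* For every real rational function $R\not\equiv0$, $$\operatorname{Ind}_{\mathbb{P}\mathbb{R}}\Big(-\frac1R\Big)=\operatorname{Ind}_{\mathbb{P}\mathbb{R}}(R).$$
   Context: For a real rational function $R$ and a real pole $\omega_0$ of $R$ of odd order, $\operatorname{Ind}_{\omega_0}(R)=+1$ if $R(\omega_0-0)<0<R(\omega_0+0)$ and $-1$ if $R(\omega_0-0)>0>R(\omega_0+0)$; $\operatorname{Ind}_{-\infty}^{+\infty}(R)$ is the sum of these over all real poles of $R$ of odd order. Writing $R=f_1/f_0$, $R$ has a pole at $\infty$ of order $\deg f_1-\deg f_0$ when this is positive; if this order is odd, $\operatorname{Ind}_\infty(R)=+1$ if $R(+\infty)<0<R(-\infty)$ and $-1$ if $R(+\infty)>0>R(-\infty)$; otherwise $\operatorname{Ind}_\infty(R)=0$. Then $\operatorname{Ind}_{\mathbb{P}\mathbb{R}}(R)=\operatorname{Ind}_{-\infty}^{+\infty}(R)+\operatorname{Ind}_\infty(R)$. *)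

From HB Require Import structures.
From mathcomp Require Import all_boot all_order all_algebra.
From mathcomp Require Import boolp reals.
From mathcomp.real_closed Require Import polyrcf.
Set Implicit Arguments. Unset Strict Implicit. Unset Printing Implicit Defensive.
Import Order.TTheory GRing.Theory Num.Theory.
Local Open Scope ring_scope.

(* A real rational function is represented as R = f1 / f0 with f0 != 0,
   i.e. as the real function x |-> f1.[x] / f0.[x]. All notions below are
   invariant under changing the representation (p,q) ~ (r p, r q). *)
Section CauchyIndex.
Variable R : realType.
Implicit Types (w : R).

Definition ratfun_val (f1 f0 : {poly R}) (x : R) : R := f1.[x] / f0.[x].

(* order of the pole of f1/f0 at w (0 if w is not a pole) *)
Definition pole_order (f1 f0 : {poly R}) w : nat := (mup w f0 - mup w f1)%N.

Definition neg_left (f1 f0 : {poly R}) w := exists2 e : R, 0 < e &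
  forall x, w - e < x < w -> ratfun_val f1 f0 x < 0.
Definition pos_left (f1 f0 : {poly R}) w := exists2 e : R, 0 < e &
  forall x, w - e < x < w -> 0 < ratfun_val f1 f0 x.
Definition neg_right (f1 f0 : {poly R}) w := exists2 e : R, 0 < e &
  forall x, w < x < w + e -> ratfun_val f1 f0 x < 0.
Definition pos_right (f1 f0 : {poly R}) w := exists2 e : R, 0 < e &
  forall x, w < x < w + e -> 0 < ratfun_val f1 f0 x.

Definition neg_pinfty (f1 f0 : {poly R}) := exists M : R, forall x, M < x -> ratfun_val f1 f0 x < 0.
Definition pos_pinfty (f1 f0 : {poly R}) := exists M : R, forall x, M < x -> 0 < ratfun_val f1 f0 x.
Definition neg_ninfty (f1 f0 : {poly R}) := exists M : R, forall x, x < M -> ratfun_val f1 f0 x < 0.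
Definition pos_ninfty (f1 f0 : {poly R}) := exists M : R, forall x, x < M -> 0 < ratfun_val f1 f0 x.

Definition Ind_at (f1 f0 : {poly R}) w : int :=
  if odd (pole_order f1 f0 w) then
    if `[< neg_left f1 f0 w /\ pos_right f1 f0 w >] then 1
    else if `[< pos_left f1 f0 w /\ neg_right f1 f0 w >] then -1
    else 0
  else 0.

(* sum over all real poles: every real pole is a root of f0, and rootsR f0
   lists the distinct real roots of f0 (poles of even/zero order contribute 0) *)
Definition Ind_real (f1 f0 : {poly R}) : int := \sum_(w <- rootsR f0) Ind_at f1 f0 w.

(* order of the pole at infinity: deg f1 - deg f0 *)
Definition pole_order_infty (f1 f0 : {poly R}) : nat := ((size f1).-1 - (size f0).-1)%N.

Definition Ind_infty (f1 f0 : {poly R}) : int :=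
  if odd (pole_order_infty f1 f0) then
    if `[< neg_pinfty f1 f0 /\ pos_ninfty f1 f0 >] then 1
    else if `[< pos_pinfty f1 f0 /\ neg_ninfty f1 f0 >] then -1
    else 0
  else 0.

Definition Ind_PR (f1 f0 : {poly R}) : int := Ind_real f1 f0 + Ind_infty f1 f0.

End CauchyIndex.

(* The real part of the index of f1/f0 is the Cauchy index cindexR f1 f0 of
   the real-closed-field library, and the part at infinity is
   -sgn lc(f1 f0) when deg f1 - deg f0 is odd and positive.  Sturm's
   reciprocity gives cindexR f1 f0 + cindexR f0 f1 = crossR (f0 f1), which is
   sgn lc(f0 f1) exactly when deg (f0 f1) is odd, i.e. when exactly one of the
   truncated differences deg f0 - deg f1, deg f1 - deg f0 is odd.  Since
   replacing f0 by -f0 negates the real index, the two contributions at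
   infinity account for the defect of the reciprocity. *)

From HB Require Import structures.
From mathcomp Require Import all_boot all_order all_algebra.
From mathcomp Require Import boolp reals.
From mathcomp.real_closed Require Import polyorder polyrcf qe_rcf_th.
From mathcomp Require Import lra zify.
Set Implicit Arguments. Unset Strict Implicit.
Import Order.TTheory GRing.Theory Num.Theory.
Local Open Scope ring_scope.

Lemma odd_subn_sum m n : (odd (m - n) + odd (n - m))%N = odd (m + n).
Proof.
case: (leqP m n) => [le_mn | /ltnW le_nm].
- by rewrite (eqP le_mn) (oddB le_mn) oddD addbC.
- by rewrite (eqP le_nm) (oddB le_nm) oddD addn0.
Qed.

Lemma odd_add_subn m n : odd (n - m) -> odd (m + n).
Proof.
by move=> odd_nm; have := odd_subn_sum m n; rewrite odd_nm addn1; case: (odd (m + n)).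
Qed.

Lemma size_mul_pred (R : idomainType) (p q : {poly R}) : p != 0 -> q != 0 ->
  (size (p * q)).-1 = ((size p).-1 + (size q).-1)%N.
Proof.
move=> p0 q0; rewrite size_mul //.
by move: (size_poly_gt0 p) (size_poly_gt0 q); rewrite p0 q0; lia.
Qed.

Section SignJump.
Variable R : realType.

Definition near_left (w : R) (P : R -> Prop) :=
  exists2 e : R, 0 < e & forall x, w - e < x < w -> P x.
Definition near_right (w : R) (P : R -> Prop) :=
  exists2 e : R, 0 < e & forall x, w < x < w + e -> P x.
Definition near_pinfty (P : R -> Prop) := exists M : R, forall x, M < x -> P x.
Definition near_ninfty (P : R -> Prop) := exists M : R, forall x, x < M -> P x.

Definition near_monotone (F : (R -> Prop) -> Prop) :=
  forall A B : R -> Prop, (forall x, A x -> B x) -> F A -> F B.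
Definition near_proper (F : (R -> Prop) -> Prop) :=
  forall A B : R -> Prop, F A -> F B -> exists x, A x /\ B x.

Lemma near_left_monotone w : near_monotone (near_left w).
Proof. by move=> A B AB [e e0 hA]; exists e => // x /hA/AB. Qed.

Lemma near_right_monotone w : near_monotone (near_right w).
Proof. by move=> A B AB [e e0 hA]; exists e => // x /hA/AB. Qed.

Lemma near_pinfty_monotone : near_monotone near_pinfty.
Proof. by move=> A B AB [M hA]; exists M => x /hA/AB. Qed.

Lemma near_ninfty_monotone : near_monotone near_ninfty.
Proof. by move=> A B AB [M hA]; exists M => x /hA/AB. Qed.

Lemma near_right_proper w : near_proper (near_right w).
Proof.
move=> A B [e e0 hA] [e' e0' hB]; set m := Num.min e e'.
have m0 : 0 < m by rewrite lt_min e0 e0'.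
have [me me'] : m <= e /\ m <= e' by rewrite !ge_min !lexx orbT.
by exists (w + m / 2); split; [apply: hA | apply: hB]; apply/andP; split; lra.
Qed.

Lemma near_ninfty_proper : near_proper near_ninfty.
Proof.
move=> A B [M hA] [M' hB]; set m := Num.min M M'.
have [mM mM'] : m <= M /\ m <= M' by rewrite !ge_min !lexx orbT.
by exists (m - 1); split; [apply: hA | apply: hB]; lra.
Qed.

Variables (L Rt : (R -> Prop) -> Prop).
Hypotheses (L_mono : near_monotone L) (Rt_mono : near_monotone Rt).
Hypothesis Rt_proper : near_proper Rt.

(* Unfolded, Ind_at f1 f0 w is sign_jump (near_left w) (near_right w) and
   Ind_infty f1 f0 is sign_jump near_pinfty near_ninfty, for f := ratfun_val f1 f0. *)
Definition sign_jump (f : R -> R) : int :=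
  if `[< L (fun x => f x < 0) /\ Rt (fun x => 0 < f x) >] then 1
  else if `[< L (fun x => 0 < f x) /\ Rt (fun x => f x < 0) >] then -1
  else 0.

Lemma sign_jumpE (f : R -> R) (s : R) : s * s = 1 ->
  L (fun x => Num.sg (f x) = - s) -> Rt (fun x => Num.sg (f x) = s) ->
  sign_jump f = sgz s.
Proof.
move=> /eqP; rewrite -expr2 sqrf_eq1 => s_unit hL hR; rewrite /sign_jump.
have sg_lt0 x : Num.sg (f x) = -1 -> f x < 0 by move=> h; rewrite -sgr_cp0 h.
have sg_gt0 x : Num.sg (f x) = 1 -> 0 < f x by move=> h; rewrite -sgr_cp0 h.
case/orP: s_unit hL hR => /eqP -> hL hR; rewrite ?opprK in hL.
- rewrite sgz1 asboolT //; split; [apply: L_mono hL | apply: Rt_mono hR].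
  + exact: sg_lt0.
  + exact: sg_gt0.
- have /asboolF -> : ~ (L (fun x => f x < 0) /\ Rt (fun x => 0 < f x)).
    case=> _ /(Rt_proper hR) [x [fx_neg fx_pos]].
    by have := sg_lt0 x fx_neg; lra.
  rewrite sgzN1 asboolT //; split; [apply: L_mono hL | apply: Rt_mono hR].
  + exact: sg_gt0.
  + exact: sg_lt0.
Qed.

End SignJump.

Section CauchyIndexFormulas.
Variable R : realType.
Implicit Types (p : {poly R}) (w : R).

Lemma near_right_sgp_right p w : p != 0 ->
  near_right w (fun x => Num.sg p.[x] = sgp_right p w).
Proof.
move=> p0; have ww1 : w < w + 1 by lra.
exists (next_root p w (w + 1) - w); first by rewrite subr_gt0 next_root_gt.
move=> x /andP[wx xe]; apply: (@sgr_neighpr _ (w + 1)).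
by rewrite /neighpr in_itv /= wx /=; move: xe; rewrite addrC subrK.
Qed.

Lemma near_left_sgp_right p w : p != 0 ->
  near_left w (fun x => Num.sg p.[x] = (-1) ^+ odd (\mu_w p) * sgp_right p w).
Proof.
move=> p0; have w1w : w - 1 < w by lra.
exists (w - prev_root p (w - 1) w); first by rewrite subr_gt0 prev_root_lt.
move=> x /andP[ex xw]; apply: (@sgr_neighpl _ (w - 1)).
by rewrite /neighpl in_itv /= xw andbT; move: ex; rewrite opprB addrC subrK.
Qed.

Lemma near_pinfty_sgp p : p != 0 ->
  near_pinfty (fun x => Num.sg p.[x] = sgp_pinfty p).
Proof.
move=> p0; exists (cauchy_bound p) => x bx.
apply: (@sgp_pinftyP _ (cauchy_bound p)); first exact: ge_cauchy_bound.
by rewrite in_itv /= ltW.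
Qed.

Lemma near_ninfty_sgp p : p != 0 ->
  near_ninfty (fun x => Num.sg p.[x] = sgp_minfty p).
Proof.
move=> p0; exists (- cauchy_bound p) => x xb.
apply: (@sgp_minftyP _ (- cauchy_bound p)); first exact: le_cauchy_bound.
by rewrite in_itv /= ltW.
Qed.

Lemma sgr_ratfun_val (g1 g0 : {poly R}) x :
  Num.sg (ratfun_val g1 g0 x) = Num.sg (g1 * g0).[x].
Proof. by rewrite /ratfun_val hornerM !sgrM sgrV. Qed.

Lemma mu_mup p w : p != 0 -> \mu_w p = mup w p.
Proof.
move=> p0; apply/eqP; rewrite eqn_leq mup_geq // root_mu /=.
by rewrite -root_le_mu // -mup_geq.
Qed.

Lemma sgp_minfty_odd p : odd (size p).-1 -> sgp_minfty p = - sgp_pinfty p.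
Proof. by move=> odd_deg; rewrite /sgp_minfty -signr_odd odd_deg mulN1r sgrN. Qed.

Lemma crossR_lead_coef p : crossR p = sgz (lead_coef p) *+ odd (size p).-1.
Proof.
have [->|p0] := eqVneq p 0; first by rewrite crossR0 lead_coef0 sgz0 mul0rn.
rewrite /crossR /variation /sgp_minfty /sgp_pinfty sgz_sgr -sgrM -mulrA -expr2.
rewrite -signr_odd sgrM [Num.sg (_ ^+ 2)]gtr0_sg ?exprn_even_gt0 ?lead_coef_eq0 //.
by case: (odd _); rewrite ?expr0 ?expr1 ?sgrN1 ?sgr1 mulr1 ?ltrN10 ?ltr10 /= ?mulr1 ?mulr0.
Qed.

Lemma jump_sgp_right (g1 g0 : {poly R}) w : g1 != 0 -> g0 != 0 ->
  odd (\mu_w g0 - \mu_w g1) -> jump g1 g0 w = sgz (sgp_right (g1 * g0) w).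
Proof.
move=> g1_0 g0_0 odd_mu; rewrite /jump g1_0 odd_mu mulr1n.
have /eqP := sgp_right_square w (mulf_neq0 g1_0 g0_0).
by rewrite -expr2 sqrf_eq1 => /orP[]/eqP->; rewrite ?ltr10 ?ltrN10 ?sgz1 ?sgzN1.
Qed.

Lemma Ind_at_jump (g1 g0 : {poly R}) w : g1 != 0 -> g0 != 0 ->
  Ind_at g1 g0 w = jump g1 g0 w.
Proof.
move=> g1_0 g0_0; rewrite /Ind_at /pole_order -!mu_mup //.
case: ifP => odd_mu; last by rewrite /jump odd_mu andbF.
have P0 : g1 * g0 != 0 by rewrite mulf_neq0.
have odd_muP : odd (\mu_w (g1 * g0)) by rewrite mu_mul // odd_add_subn.
rewrite jump_sgp_right //.
apply: (@sign_jumpE _ (near_left w) (near_right w)).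
- exact: near_left_monotone.
- exact: near_right_monotone.
- exact: near_right_proper.
- exact: sgp_right_square.
- apply: near_left_monotone (near_left_sgp_right w P0) => x.
  by rewrite sgr_ratfun_val odd_muP mulN1r.
- apply: near_right_monotone (near_right_sgp_right w P0) => x.
  by rewrite sgr_ratfun_val.
Qed.

Lemma Ind_infty_lead_coef (g1 g0 : {poly R}) : g1 != 0 -> g0 != 0 ->
  Ind_infty g1 g0 = - sgz (lead_coef (g1 * g0)) *+ odd (pole_order_infty g1 g0).
Proof.
move=> g1_0 g0_0; rewrite /Ind_infty; case: ifP => odd_ord; last by [].
have P0 : g1 * g0 != 0 by rewrite mulf_neq0.
have odd_deg : odd (size (g1 * g0)).-1.
  by rewrite size_mul_pred // addnC odd_add_subn.
rewrite mulr1n; transitivity (sgz (sgp_minfty (g1 * g0))).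
  apply: (@sign_jumpE _ (@near_pinfty R) (@near_ninfty R)).
  - exact: near_pinfty_monotone.
  - exact: near_ninfty_monotone.
  - exact: near_ninfty_proper.
  - by rewrite sgp_minfty_odd // mulrNN -expr2 sqr_sg lead_coef_eq0 P0.
  - apply: near_pinfty_monotone (near_pinfty_sgp P0) => x.
    by rewrite sgr_ratfun_val sgp_minfty_odd // opprK.
  - apply: near_ninfty_monotone (near_ninfty_sgp P0) => x.
    by rewrite sgr_ratfun_val.
by rewrite sgp_minfty_odd // sgzN sgz_sgr.
Qed.

Lemma Ind_real_cindexR (g1 g0 : {poly R}) : g1 != 0 -> g0 != 0 ->
  Ind_real g1 g0 = cindexR g1 g0.
Proof. by move=> g1_0 g0_0; apply: eq_bigr => w _; apply: Ind_at_jump. Qed.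

Lemma cindexR_oppl (p q : {poly R}) : cindexR (- p) q = - cindexR p q.
Proof.
rewrite /cindexR -sumrN; apply: eq_bigr => w _.
by rewrite -scaleN1r jump_mulCp sgzN1 mulN1r.
Qed.

Lemma cindexR_reciprocity (p q : {poly R}) : p != 0 -> q != 0 ->
  cindexR q p + cindexR p q = crossR (p * q).
Proof.
move=> p0 q0; have pq0 : p * q != 0 by rewrite mulf_neq0.
pose b := cauchy_bound (p * q).
have noroot_left : {in `]-oo, - b], forall x, ~~ root (p * q) x}.
  exact: le_cauchy_bound.
have noroot_right : {in `[b, +oo[, forall x, ~~ root (p * q) x}.
  exact: ge_cauchy_bound.
have noroot_factors x : ~~ root (p * q) x -> ~~ root p x /\ ~~ root q x.
  by rewrite rootM => /norP.
rewrite -(@cindexRP _ _ _ (- b) b); first last.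
- by move=> x /noroot_right/noroot_factors[].
- by move=> x /noroot_left/noroot_factors[].
rewrite -(@cindexRP _ _ _ (- b) b); first last.
- by move=> x /noroot_right/noroot_factors[].
- by move=> x /noroot_left/noroot_factors[].
rewrite -(@crossRP _ _ (- b) b) //; apply: cindex_inv.
- by rewrite gt0_cp // cauchy_bound_gt0.
- by rewrite noroot_left // in_itv /= lexx.
- by rewrite noroot_right // in_itv /= lexx.
Qed.

End CauchyIndexFormulas.

Theorem lemma55 (R : realType) (f1 f0 : {poly R}) :
  f0 != 0 -> f1 != 0 -> Ind_PR (- f0) f1 = Ind_PR f1 f0.
Proof.
move=> f0_0 f1_0; have Nf0_0 : - f0 != 0 by rewrite oppr_eq0.
rewrite /Ind_PR !Ind_real_cindexR // !Ind_infty_lead_coef // cindexR_oppl.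
rewrite mulNr lead_coefN sgzN opprK (mulrC f1 f0) /pole_order_infty size_polyN.
have := cindexR_reciprocity f0_0 f1_0.
rewrite crossR_lead_coef size_mul_pred // -odd_subn_sum mulrnDr.
rewrite mulNrn; set A := _ *+ odd _; set B := _ *+ odd _; lia.
Qed.
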